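(* The class of data languages accepted by SAFA is not closed under complementation: there exists a data language $L\subseteq(\Sigma\times D)^*$ accepted by some SAFA such that no SAFA accepts $(\Sigma\times D)^*\setminus L$.
   Context: $D$ is a fixed countably infinite set of data values; for a finite alphabet $\Sigma$, data words are elements of $(\Sigma\times D)^*$. A set augmented finite automaton (SAFA) is a tuple $M=(Q,\Sigma\times D,q_0,F,H,\delta)$: $Q$ finite set of states, $q_0\in Q$ initial, $F\subseteq Q$ final, $H=\{h_1,\dots,h_m\}$ a finite collection of (names of) sets of data values, $\delta\subseteq Q\times\Sigma\times C\times OP\times Q$ with $C=\{p(h_i),\,!p(h_i): h_i\in H\}$, $OP=\{-\}\cup\{\mathsf{ins}(h_i):h_i\in H\}$. Configurations are $(q,\langle S_1,\dots,S_m\rangle)$ with $S_i\subseteq D$ finite; initially state $q_0$ and all sets empty. On reading $(a,d)$, a transition $(q,a,\alpha,op,q')$ from the current state may be taken if $\alpha=p(h_i)$ and $d\in S_i$, or $\alpha=\,!p(h_i)$ and $d\notin S_i$; then the state becomes $q'$ and if $op=\mathsf{ins}(h_j)$ the value $d$ is added to $S_j$ ($op=-$ changes nothing). A word is accepted if some run reads it entirely and ends in $F$; $L(M)$ is the set of accepted words. *)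

From mathcomp Require Import all_boot.
Set Implicit Arguments. Unset Strict Implicit. Unset Printing Implicit Defensive.

Definition D := nat.

Definition dword (Sigma : Type) := seq (Sigma * D).

(* Conditions over H = {h_0, ..., h_(m-1)} (indexed by 'I_m):
   (true, i)  stands for p(h_i)   (d \in S_i),
   (false, i) stands for !p(h_i)  (d \notin S_i). *)
Definition cond (m : nat) := (bool * 'I_m)%type.

(* Operations: None stands for "-", Some j stands for ins(h_j). *)
Definition op (m : nat) := option 'I_m.

Record safa (Sigma : finType) := Safa {
  st : finType;
  init : st;
  final : pred st;
  nsets : nat;
  delta : pred (st * Sigma * cond nsets * op nsets * st)
}.

(* Contents of the sets S_1..S_m; they start empty and only grow by single
   insertions, hence are always finite. *)
Definition sets (m : nat) := 'I_m -> pred D.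

Definition empty_sets (m : nat) : sets m := fun _ _ => false.

Definition apply_op (m : nat) (o : op m) (d : D) (S : sets m) : sets m :=
  match o with
  | None => S
  | Some j => fun k x => if k == j then (x == d) || S k x else S k x
  end.

Definition cond_holds (m : nat) (c : cond m) (d : D) (S : sets m) : bool :=
  S c.2 d == c.1.

Fixpoint acc_from (Sigma : finType) (M : safa Sigma) (q : st M)
    (S : sets (nsets M)) (w : dword Sigma) : Prop :=
  match w with
  | [::] => @final _ M q
  | (a, d) :: w' =>
      exists (c : cond (nsets M)) (o : op (nsets M)) (q' : st M),
        [/\ @delta _ M (q, a, c, o, q'), cond_holds c d S &
            @acc_from Sigma M q' (apply_op o d S) w']
  end.

Definition accepts (Sigma : finType) (M : safa Sigma) (w : dword Sigma) : Prop :=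
  @acc_from Sigma M (@init _ M) (@empty_sets (nsets M)) w.

(* The witness accepts the words in which some data value occurs exactly once:
   it guesses that occurrence, using one set to check that the value was not
   seen before and another to check that it never recurs.  Suppose a SAFA with
   K states accepted the complement.  It accepts u u, where u carries K
   distinct data values, since every value occurs twice.  Some state repeats
   along the second copy of u, and cutting out the factor between the two
   occurrences leaves an accepting run: that factor only inserted its own
   values into the sets, and none of them occurs later.  But in the shortened
   word the first value of the cut factor occurs exactly once. *)

From mathcomp Require Import all_boot zify.
Set Implicit Arguments. Unset Strict Implicit.

Definition data (Sigma : Type) (w : dword Sigma) : seq D := map snd w.

Lemma data_cat (Sigma : Type) (w1 w2 : dword Sigma) :
  data (w1 ++ w2) = data w1 ++ data w2.
Proof. exact: map_cat. Qed.

Lemma pigeonhole_nat (T : finType) (g : nat -> T) n :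
  #|T| <= n -> exists a b, [/\ a < b, b <= n & g a = g b].
Proof.
move=> cardT.
have /injectivePn [i [j neq_ij eq_g]] : ~~ injectiveb (fun i : 'I_n.+1 => g i).
  by apply/injectiveP => /leq_card; rewrite card_ord; lia.
have lt_i := ltn_ord i; have lt_j := ltn_ord j.
case: (ltngtP i j) => [lt_ij|lt_ji|eq_ij].
- by exists i, j.
- by exists j, i.
- by move/val_inj: eq_ij neq_ij => ->; rewrite eqxx.
Qed.

Section Runs.
Variables (Sigma : finType) (M : safa Sigma).

Definition config := (st M * sets (nsets M))%type.

Definition step (c c' : config) (x : Sigma * D) : Prop :=
  exists (cc : cond (nsets M)) (o : op (nsets M)),
    [/\ @delta _ M (c.1, x.1, cc, o, c'.1), cond_holds cc x.2 c.2 &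
        c'.2 = apply_op o x.2 c.2].

Fixpoint reach (c : config) (w : dword Sigma) (c' : config) : Prop :=
  match w with
  | [::] => c = c'
  | x :: w' => exists c1, step c c1 x /\ reach c1 w' c'
  end.

Notation acc c := (acc_from c.1 c.2).

Lemma acc_cons (c : config) x w :
  acc c (x :: w) <-> exists c1, step c c1 x /\ acc c1 w.
Proof.
case: c x => q S [a d]; split => /=.
  by move=> [cc [o [q' [? ? ?]]]]; exists (q', apply_op o d S); split => //; exists cc, o.
by move=> [[q' S'] [[cc [o [/= ? ? ->]]] ?]]; exists cc, o, q'.
Qed.

Lemma acc_catP (c : config) w1 w2 :
  acc c (w1 ++ w2) <-> exists c', reach c w1 c' /\ acc c' w2.
Proof.
elim: w1 c => [|x w1 IH] c; first by split=> [|[c' [<-]]] //; exists c.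
rewrite acc_cons; split.
  by move=> [c1 [st1 /IH [c' [r1 acc']]]]; exists c'; split => //; exists c1.
by move=> [c' [[c1 [st1 r1]] acc']]; exists c1; split => //; apply/IH; exists c'.
Qed.

Lemma acc_run (c : config) v : acc c v ->
  exists f : nat -> config, [/\ f 0 = c,
    forall i j, i <= j -> j <= size v -> reach (f i) (drop i (take j v)) (f j) &
    forall i, i <= size v -> acc (f i) (drop i v)].
Proof.
elim: v c => [|x v IH] c; first by exists (fun=> c); split => // [[|i] [|j]].
move=> /acc_cons [c1 [st1 acc1]]; have [g [g0 reach_g acc_g]] := IH _ acc1.
exists (fun i => if i is i'.+1 then g i' else c); split => //.
  case=> [|i] [|j] //= le_ij le_j; last exact: reach_g.
  by exists c1; split => //; rewrite -g0 -(drop0 (take j v)); apply: reach_g.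
case=> [|i] le_i; last exact: acc_g.
by rewrite drop0; apply/acc_cons; exists c1.
Qed.

Lemma reach_frame (c c' : config) w : reach c w c' ->
  forall k d, d \notin data w -> c'.2 k d = c.2 k d.
Proof.
elim: w c => [|[a d'] w IH] c /=; first by move=> ->.
move=> [c1 [[cc [o [_ _ c1_sets]]] r1]] k d; rewrite inE negb_or => /andP [neq_d nin_d].
rewrite (IH _ r1 k d nin_d) c1_sets; case: o {c1_sets} => [j|] //=.
by rewrite (negbTE neq_d); case: ifP.
Qed.

Lemma acc_agree (q : st M) (S S' : sets (nsets M)) w :
  (forall k d, d \in data w -> S k d = S' k d) ->
  acc_from q S w -> acc_from q S' w.
Proof.
elim: w q S S' => [|[a d] w IH] q S S' //= agree [cc [o [q' [tr holds acc']]]].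
have agree_w k e : e \in data w -> S k e = S' k e.
  by move=> e_in; apply: agree; rewrite inE e_in orbT.
exists cc, o, q'; split => //.
  by rewrite /cond_holds -agree // inE eqxx.
apply: IH acc' => k e e_in; case: o {tr} => [j|] /=; last exact: agree_w.
by case: (k == j); rewrite agree_w.
Qed.

Lemma acc_pump_down (q : st M) (S : sets (nsets M)) x v :
  uniq (data v) -> #|st M| <= size v -> acc_from q S (x ++ v) ->
  exists a b, [/\ a < b, b <= size v & acc_from q S (x ++ take a v ++ drop b v)].
Proof.
move=> uniq_v size_v /(acc_catP (q, S)) [c [reach_x /acc_run [f [f0 reach_f acc_f]]]].
have [a [b [lt_ab le_b eq_st]]] := pigeonhole_nat (fun i => (f i).1) size_v.
exists a, b; split => //; apply/(acc_catP (q, S)); exists c; split => //.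
apply/acc_catP; exists (f a); split.
  by rewrite -f0 -(drop0 (take a v)); apply: reach_f; lia.
have ab_disjoint d : d \in data (drop b v) -> d \notin data (drop a (take b v)).
  move: uniq_v; rewrite -{1}(cat_take_drop b v) data_cat cat_uniq.
  move=> /and3P [_ /hasPn disj _] d_in; apply: contra (disj _ d_in).
  by rewrite /data map_drop => /mem_drop.
rewrite eq_st; apply: acc_agree (acc_f b le_b) => k d d_in.
by rewrite (reach_frame (reach_f a b (ltnW lt_ab) le_b)) ?ab_disjoint.
Qed.

End Runs.

Lemma count_data1P (Sigma : finType) (w : dword Sigma) d :
  count_mem d (data w) = 1 <->
  exists x a y, [/\ w = x ++ (a, d) :: y, d \notin data x & d \notin data y].
Proof.
split; last first.
  move=> [x [a [y [-> /count_memPn x0 /count_memPn y0]]]].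
  by rewrite data_cat count_cat /= x0 y0 eqxx.
move=> once; have : d \in data w by rewrite -has_pred1 has_count once.
case/mapP=> [[a d'] /= aw eq_d]; subst d'; case/splitPr: aw once => x y.
rewrite data_cat count_cat /= eqxx add1n addnS => -[/eqP].
by rewrite addn_eq0 => /andP [/eqP/count_memPn nx /eqP/count_memPn ny]; exists x, a, y.
Qed.

Definition h0 : 'I_2 := ord0.
Definition h1 : 'I_2 := ord_max.

(* In state [false], [h0] collects the values read so far; the guessed value
   is stored in [h1] and state [true] checks that it does not recur. *)
Definition once_delta (Sigma : finType) (t : bool * Sigma * cond 2 * op 2 * bool) : bool :=
  let: (q, _, c, o, q') := t in
  match q, q' with
  | false, false => o == Some h0
  | false, true => (c == (false, h0)) && (o == Some h1)
  | true, true => (c == (false, h1)) && (o == None)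
  | true, false => false
  end.

Definition once_safa (Sigma : finType) : safa Sigma :=
  @Safa Sigma bool false id 2 (@once_delta Sigma).

Section OnceSafa.
Variable Sigma : finType.
Notation M := (once_safa Sigma).

Lemma once_acc_true (S : sets 2) (w : dword Sigma) :
  @acc_from _ M true S w <-> ~~ has (S h1) (data w).
Proof.
elim: w => [|[a d] w IH] //=.
split.
  move=> [c [o [[] [] // /andP [/eqP -> /eqP ->] /eqP holds /IH]]].
  by rewrite /= holds.
move=> /norP [/negbTE nd /IH acc_w]; exists (false, h1), None, true.
by rewrite /cond_holds /= nd.
Qed.

Lemma once_acc_false (S : sets 2) (w : dword Sigma) : S h1 =1 pred0 ->
  @acc_from _ M false S w <->
  exists x a d y,
    [/\ w = x ++ (a, d) :: y, d \notin data x, ~~ S h0 d & d \notin data y].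
Proof.
elim: w S => [|[a' d'] w IH] S S1.
  by split=> // -[[|? ?] [? [? [? []]]]].
split.
  move=> [c [o [[] [tr holds acc']]]].
    move: tr holds acc' => /andP [/eqP -> /eqP ->] /eqP nS /once_acc_true acc'.
    exists [::], a', d', w; split => //; first by rewrite nS.
    by apply: contra acc' => d_in; apply/hasP; exists d'; rewrite //= eqxx.
  move: tr acc' => /eqP -> /IH [//|x [a [d [y [-> nx nS ny]]]]].
  exists ((a', d') :: x), a, d, y; move: nS => /norP [neq_d nS].
  by split; rewrite //= inE negb_or neq_d.
move=> [x [a [d [y [eq_w nx nS ny]]]]].
case: x eq_w nx => [|[a'' d''] x] [-> -> eq_w] nx.
  exists (false, h0), (Some h1), true; split => //; first by rewrite /cond_holds (negbTE nS).
  apply/once_acc_true/hasPn => e; rewrite eq_w /= S1 orbF => e_in.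
  by apply: contraNneq ny => <-.
exists (S h0 d'', h0), (Some h0), false; split; rewrite /cond_holds ?eqxx //.
apply/(IH _ S1); exists x, a, d, y; move: nx; rewrite inE negb_or => /andP [neq_d nx].
by rewrite /= negb_or nS andbT.
Qed.

Lemma accepts_once (w : dword Sigma) :
  accepts M w <-> exists d, count_mem d (data w) = 1.
Proof.
have acc_w := @once_acc_false (@empty_sets 2) w (fun=> erefl).
split => [/acc_w [x [a [d [y [eq_w nx _ ny]]]]] | [d /count_data1P [x [a [y [eq_w nx ny]]]]]].
  by exists d; apply/count_data1P; exists x, a, y.
by apply/acc_w; exists x, a, d, y.
Qed.

End OnceSafa.

Definition distinct_word K : dword unit := [seq (tt, i) | i <- iota 0 K].

Lemma data_distinct_word K : data (distinct_word K) = iota 0 K.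
Proof. by rewrite /data -map_comp map_id. Qed.

Lemma count_iota_pump_down K a b : a < b -> b <= K ->
  count_mem a (iota 0 K ++ take a (iota 0 K) ++ drop b (iota 0 K)) = 1.
Proof.
move=> lt_ab le_b; rewrite take_iota drop_iota !count_cat count_uniq_mem ?iota_uniq //.
rewrite !(count_memPn _) ?mem_iota; lia.
Qed.

Theorem lemma8 :
  exists (Sigma : finType) (M : safa Sigma),
    forall M' : safa Sigma,
      ~ (forall w : dword Sigma, accepts M' w <-> ~ accepts M w).
Proof.
exists unit, (once_safa unit) => M' complement.
pose K := #|st M'|; pose u := distinct_word K.
have size_u : size u = K by rewrite size_map size_iota.
have uu_rejected : ~ accepts (once_safa unit) (u ++ u).
  move/accepts_once => [d]; rewrite data_cat data_distinct_word count_cat addnn.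
  by move/(congr1 odd); rewrite odd_double.
have [a [b [lt_ab le_b /complement]]] :
    exists a b, [/\ a < b, b <= size u & accepts M' (u ++ take a u ++ drop b u)].
  apply: acc_pump_down; last exact/complement.
    by rewrite data_distinct_word iota_uniq.
  by rewrite size_u.
apply; apply/accepts_once; exists a.
rewrite !data_cat /data map_take map_drop -/(data u) data_distinct_word.
by apply: count_iota_pump_down; rewrite // -size_u.
Qed.
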